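(* For every instance of 2NC-TAP and every run of the greedy algorithm (with arbitrary tie-breaking), the dual vector $y$ defined from that run satisfies $y_{\mathcal P}\ge 0$ for every $u\in N(T)$ and every $\mathcal P\in\Pi_u$. Equivalently, for each $u\in N(T)$ and each $j\in\{2,\dots,\nu(u)-1\}$, $\mathrm{wgt}(\mathcal P^{(j)}_u)\ge \mathrm{wgt}(\mathcal P^{(j-1)}_u)$.
   Context: An instance of 2NC-TAP consists of a simple undirected 2-node connected graph $G=(V,E)$ with $|V|\ge 3$, a spanning tree $T\subseteq E$ of $G$ (whose edges have cost $0$), and nonnegative costs $\mathrm{cost}(\ell)$ on the links, i.e. the edges of $L(G):=E\setminus T$. Let $N(T)$ be the set of non-leaf nodes of $T$. For $u\in N(T)$, let $\pi_u$ be the partition of $V\setminus\{u\}$ into the vertex sets of the connected components of $T-u$, let $\nu(u)=|\pi_u|$, and let $\Pi_u$ be the set of partitions $\mathcal P$ of $V\setminus\{u\}$ such that every set of $\pi_u$ is contained in a set of $\mathcal P$ (partitions associated with different $u$ are regarded as distinct objects). A link $\ell$ crosses $\mathcal P\in\Pi_u$ if neither end node of $\ell$ is $u$ and its end nodes lie in different sets of $\mathcal P$. Greedy algorithm: start with $F^1=\emptyset$. At the start of iteration $i=1,2,\dots$, for each $u\in N(T)$ let the current partition $\mathcal P^i_u\in\Pi_u$ be the partition of $V\setminus\{u\}$ into the vertex sets of the connected components of $(V,T\cup F^i)-u$. For each link $\ell$ let $\mathrm{inc}^i(\ell)=\{\mathcal P^i_u: u\in N(T),\ \ell \text{ crosses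 } \mathcal P^i_u\}$. If $(V,T\cup F^i)$ is 2-node connected, stop and output $\hat F=F^i$. Otherwise pick a link $\ell_i$ with $\mathrm{inc}^i(\ell_i)\neq\emptyset$ minimizing $\mathrm{cost}(\ell_i)/|\mathrm{inc}^i(\ell_i)|$ (ties broken arbitrarily), set $\mathrm{wgt}(\mathcal P^i_u)=\mathrm{cost}(\ell_i)/|\mathrm{inc}^i(\ell_i)|$ for every $\mathcal P^i_u\in\mathrm{inc}^i(\ell_i)$, and set $F^{i+1}=F^i\cup\{\ell_i\}$. (All other partitions have weight $0$.) For $u\in N(T)$, let $\mathcal P^{(1)}_u,\dots,\mathcal P^{(\nu(u)-1)}_u$ be the partitions in $\Pi_u$ that are crossed by the link picked in some iteration at the time they are current (i.e. $\mathcal P^i_u\in\mathrm{inc}^i(\ell_i)$), listed in the order of the iterations in which this happens. The dual vector $y$ is: $y_{\mathcal P^{(1)}_u}=\mathrm{wgt}(\mathcal P^{(1)}_u)$, $y_{\mathcal P^{(j)}_u}=\mathrm{wgt}(\mathcal P^{(j)}_u)-\mathrm{wgt}(\mathcal P^{(j-1)}_u)$ for $j=2,\dots,\nu(u)-1$, and $y_{\mathcal P}=0$ for all other $\mathcal P\in\Pi_u$. *)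

From mathcomp Require Import all_boot all_order all_algebra.
Set Implicit Arguments. Unset Strict Implicit. Unset Printing Implicit Defensive.
Import Order.TTheory GRing.Theory Num.Theory.

Section TwoNCTAP.
Variable V : finType.

Definition simple_graph (E : rel V) : Prop := symmetric E /\ irreflexive E.

Definition connected_graph (H : rel V) : Prop := forall x y, connect H x y.

(* H - w : edges incident to w are removed (w becomes isolated and is
   never used by a path between two vertices different from w) *)
Definition del_vertex (H : rel V) (w : V) : rel V :=
  [rel a b | [&& H a b, a != w & b != w]].

Definition two_node_connected (H : rel V) : Prop :=
  2 < #|V| /\ connected_graph H /\
  forall w x y, x != w -> y != w -> connect (del_vertex H w) x y.

Definition spanning_tree (E T : rel V) : Prop :=
  [/\ symmetric T, subrel T E, connected_graph T &
      forall x y, T x y ->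
        ~~ connect [rel a b | [&& T a b, (a, b) != (x, y) & (a, b) != (y, x)]] x y].

(* links: edges of G not in T, represented as (oriented) pairs *)
Definition is_link (E T : rel V) (l : V * V) : bool := E l.1 l.2 && ~~ T l.1 l.2.

Definition aug_graph (T : rel V) (F : seq (V * V)) : rel V :=
  [rel a b | [|| T a b, (a, b) \in F | (b, a) \in F]].

Definition non_leaf (T : rel V) (u : V) : bool := 1 < #|[set v | T u v]|.

(* l crosses the current partition P_u (components of (V, T ∪ F) - u) *)
Definition crosses (T : rel V) (F : seq (V * V)) (u : V) (l : V * V) : bool :=
  [&& l.1 != u, l.2 != u & ~~ connect (del_vertex (aug_graph T F) u) l.1 l.2].

(* |inc(l)| : number of current partitions (one per u ∈ N(T)) crossed by l *)
Definition inc_card (T : rel V) (F : seq (V * V)) (l : V * V) : nat :=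
  #|[set u | non_leaf T u && crosses T F u l]|.

Variable R : realFieldType.

Definition ratio (T : rel V) (cost : V -> V -> R) (F : seq (V * V)) (l : V * V) : R :=
  (cost l.1 l.2 / (inc_card T F l)%:R)%R.

Definition greedy_step (E T : rel V) (cost : V -> V -> R) (F : seq (V * V))
    (l : V * V) : Prop :=
  [/\ ~ two_node_connected (aug_graph T F), is_link E T l, 0 < inc_card T F l &
      forall l', is_link E T l' -> 0 < inc_card T F l' ->
        (ratio T cost F l <= ratio T cost F l')%R].

Definition greedy_run (E T : rel V) (cost : V -> V -> R) (s : seq (V * V)) : Prop :=
  (forall F l rest, s = F ++ l :: rest -> greedy_step E T cost F l) /\
  two_node_connected (aug_graph T s).

(* wgt(P_u^(1)), ..., wgt(P_u^(m)) in iteration order *)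
Fixpoint wgt_seq_aux (T : rel V) (cost : V -> V -> R) (u : V)
    (F s : seq (V * V)) : seq R :=
  match s with
  | [::] => [::]
  | l :: s' =>
      (if non_leaf T u && crosses T F u l then [:: ratio T cost F l] else [::])
        ++ wgt_seq_aux T cost u (rcons F l) s'
  end.

Definition wgt_seq (T : rel V) (cost : V -> V -> R) (u : V) (s : seq (V * V)) : seq R :=
  wgt_seq_aux T cost u [::] s.

(* dual vector: y(P_u^(j+1)) for 0-based j; zero outside the listed partitions *)
Definition ydual (T : rel V) (cost : V -> V -> R) (u : V) (s : seq (V * V)) (j : nat) : R :=
  let w := wgt_seq T cost u s in
  if j < size w then
    (if j is j'.+1 then nth 0 w j - nth 0 w j' else nth 0 w 0)%R
  else 0%R.

End TwoNCTAP.

From mathcomp Require Import all_boot all_order all_algebra.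
Import Order.TTheory GRing.Theory Num.Theory.

Set Implicit Arguments.
Unset Strict Implicit.
Unset Printing Implicit Defensive.

(* Adding links only merges the components of (V, T ∪ F) - u, so the number
   of current partitions a fixed link crosses can only drop and its ratio
   cost/|inc| can only grow.  The greedy choice is the minimum ratio at its
   iteration, and every later pick was an available link at that time, so
   the weights wgt(P^(1)_u), wgt(P^(2)_u), ... are nondecreasing; their
   consecutive differences are the dual values. *)

Section GreedyWeights.
Variables (V : finType) (R : realFieldType).
Variables (E T : rel V) (cost : V -> V -> R).
Hypothesis cost_ge0 : forall l, is_link E T l -> (0 <= cost l.1 l.2)%R.
Implicit Types (F G : seq (V * V)) (l : V * V) (u : V).

Lemma crosses_subset F F' u l : {subset F <= F'} ->
  crosses T F' u l -> crosses T F u l.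
Proof.
move=> sFF' /and3P[l1u l2u disc]; apply/and3P; split=> //.
apply: contra disc => /connect_sub; apply=> a b /and3P[ab au bu].
apply: connect1; apply/and3P; split=> //.
move: ab; rewrite /aug_graph /=.
by case/or3P=> [-> | /sFF' -> | /sFF' ->]; rewrite ?orbT.
Qed.

Lemma inc_card_subset F F' l : {subset F <= F'} ->
  (inc_card T F' l <= inc_card T F l)%N.
Proof.
move=> sFF'; apply/subset_leq_card/subsetP => u.
by rewrite !inE => /andP[-> /crosses_subset->].
Qed.

Lemma ratio_subset F F' l : {subset F <= F'} ->
  (0 <= cost l.1 l.2)%R -> (0 < inc_card T F' l)%N ->
  (ratio T cost F l <= ratio T cost F' l)%R.
Proof.
move=> sFF' cl_ge0 inc_gt0; apply: ler_wpM2l => //.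
have inc_le := inc_card_subset l sFF'.
by rewrite lef_pV2 ?ler_nat // posrE ltr0n // (leq_trans inc_gt0).
Qed.

Lemma greedy_step_ratio_le F G l l' :
  greedy_step E T cost F l -> greedy_step E T cost (F ++ G) l' ->
  (ratio T cost F l <= ratio T cost (F ++ G) l')%R.
Proof.
move=> [_ _ _ l_min] [_ l'_link l'_inc _].
have sFFG : {subset F <= F ++ G} by move=> x; rewrite mem_cat => ->.
apply: le_trans (l_min l' l'_link _) (ratio_subset sFFG (cost_ge0 l'_link) l'_inc).
exact: leq_trans l'_inc (inc_card_subset l' sFFG).
Qed.

Lemma greedy_step_ratio_ge0 F l :
  greedy_step E T cost F l -> (0 <= ratio T cost F l)%R.
Proof. by case=> _ l_link _ _; rewrite divr_ge0 ?ler0n ?cost_ge0. Qed.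

Definition greedy_from F s :=
  forall G l rest, s = G ++ l :: rest -> greedy_step E T cost (F ++ G) l.

Lemma greedy_from_cons F l s :
  greedy_from F (l :: s) -> greedy_step E T cost F l /\ greedy_from (rcons F l) s.
Proof.
move=> run; split; first by rewrite -[F]cats0; apply: (run [::] _ s).
by move=> G l' rest eq_s; rewrite -cats1 -catA; apply: (run (l :: G)); rewrite eq_s.
Qed.

Lemma mem_wgt_seq_aux u F s x : x \in wgt_seq_aux T cost u F s ->
  exists G l rest, s = G ++ l :: rest /\ x = ratio T cost (F ++ G) l.
Proof.
elim: s F => [|l s IH] F //=; rewrite mem_cat => /orP[].
  by case: ifP => // _; rewrite inE => /eqP->; exists [::], l, s; rewrite cats0.
case/IH=> G [l' [rest [-> ->]]].
by exists (l :: G), l', rest; rewrite -cats1 -catA.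
Qed.

Lemma wgt_seq_aux_ge0 u F s x : greedy_from F s ->
  x \in wgt_seq_aux T cost u F s -> (0 <= x)%R.
Proof.
move=> run /mem_wgt_seq_aux[G [l [rest [eq_s ->]]]].
exact/greedy_step_ratio_ge0/(run _ _ _ eq_s).
Qed.

Lemma sorted_wgt_seq_aux u F s : greedy_from F s ->
  sorted <=%R (wgt_seq_aux T cost u F s).
Proof.
elim: s F => [|l s IH] F //= /greedy_from_cons[step_l run].
have := IH _ run; case: ifP => _; last by [].
case def_w: (wgt_seq_aux T cost u (rcons F l) s) => [|y w]; first by [].
rewrite /= => ->; rewrite andbT.
have : y \in wgt_seq_aux T cost u (rcons F l) s by rewrite def_w mem_head.
case/mem_wgt_seq_aux=> G [l' [rest [eq_s ->]]].
rewrite -cats1 -catA; apply: greedy_step_ratio_le step_l _.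
by rewrite catA cats1; apply: run eq_s.
Qed.

End GreedyWeights.

Lemma sorted_nth_sub_ge0 (R : realFieldType) (w : seq R) j :
  sorted <=%R w -> j.+1 < size w -> (0 <= nth 0 w j.+1 - nth 0 w j)%R.
Proof.
move=> w_sorted j_lt; rewrite subr_ge0.
by apply: (sorted_leq_nth le_trans lexx) => //; rewrite inE // ltnW.
Qed.

Theorem mainTheorem3 (R : realFieldType) (V : finType) (E T : rel V)
    (cost : V -> V -> R) (s : seq (V * V)) :
  simple_graph E -> two_node_connected E -> spanning_tree E T ->
  (forall x y, cost x y = cost y x) ->
  (forall l, is_link E T l -> (0 <= cost l.1 l.2)%R) ->
  greedy_run E T cost s ->
  forall u, non_leaf T u -> forall j, (0 <= ydual T cost u s j)%R.
Proof.
move=> _ _ _ _ cost_ge0 [run _] u _ j.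
have w_sorted := sorted_wgt_seq_aux cost_ge0 u (F := [::]) run.
have w_ge0 := wgt_seq_aux_ge0 cost_ge0 (u := u) (F := [::]) run.
rewrite /ydual /wgt_seq; case: ifP => // j_lt.
case: j j_lt => [|j] j_lt; first exact/w_ge0/mem_nth.
exact: sorted_nth_sub_ge0.
Qed.
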